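(* Let $\mathbf{F}$ be a foliage tree and let $X$ be a topological space. (a) $\mathbf{F}$ is a locally strict foliage $\omega,\omega$-tree with strict branches if and only if $\mathbf{F}$ is isomorphic to $\mathbf{S}$. (b) $\mathbf{F}$ is a Baire foliage tree on $X$ if and only if there exist an isomorphism $(\varphi,\psi)$ between $\mathbf{F}$ and $\mathbf{S}$ and a topology $\tau$ on ${}^{\omega}\omega$ such that $\psi$ is a homeomorphism from $X$ onto $({}^{\omega}\omega,\tau)$ and $\mathbf{S}$ is a Baire foliage tree on $({}^{\omega}\omega,\tau)$. (c) $\mathbf{F}$ is a $\pi$-tree on $X$ if and only if there exist an isomorphism $(\varphi,\psi)$ between $\mathbf{F}$ and $\mathbf{S}$ and a topology $\tau$ on ${}^{\omega}\omega$ such that $\psi$ is a homeomorphism from $X$ onto $({}^{\omega}\omega,\tau)$ and $\mathbf{S}$ is a $\pi$-tree on $({}^{\omega}\omega,\tau)$.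
   Context: Natural numbers are von Neumann ordinals, $n=\{0,\dots,n-1\}$, $\omega=\{0,1,2,\dots\}$; ${}^{B}A$ is the set of functions $B\to A$, ${}^{<\omega}\omega=\bigcup_{n\in\omega}{}^{n}\omega$ (finite sequences), ordered by $\subsetneq$ (extension). A tree is a strict partial order $(T,<)$ in which the set of predecessors of every node is well-ordered; $\mathrm{height}_T(x)$ is the ordinal isomorphic to the set of predecessors of $x$; the height of $T$ is the least ordinal $\beta$ such that no node has height $\beta$; a branch is a $\subseteq$-maximal chain; $\mathrm{sons}_T(x)$ is the set of immediate successors of $x$; $\max T$ is the set of maximal nodes; $0_T$ denotes the least node when it exists. A foliage tree is a pair $\mathbf{F}=(T,l)$ with $T$ a tree (the skeleton) and $l$ a function whose domain is the set of nodes of $T$; $\mathbf{F}_x:=l(x)$ is the leaf at $x$; tree notions are applied to $\mathbf{F}$ via its skeleton; $\mathrm{flesh}\,\mathbf{F}=\bigcup_x\mathbf{F}_x$. For a node $v$, $\mathrm{shoot}_{\mathbf{F}}(v)=\{\bigcup_{x\in C}\mathbf{F}_x: C\text{ a cofinite subset of }\mathrm{sons}_{\mathbf{F}}(v)\}$; for a point $p$, $\mathrm{scope}_{\mathbf{F}}(p)=\{x:p\in\mathbf{F}_x\}$. For families $\gamma,\delta$ of sets, $\gamma\gg\delta$ means: for every nonempty $D\in\delta$ there is a nonempty $G\in\gamma$ with $G\subseteq D$. $\mathbf{F}$ is locally strict if for every non-maximal node $x$, $\mathbf{F}_x$ is the union of the pairwise disjoint sets $\mathbf{F}_s$, $s\in\mathrm{sons}_{\mathbf{F}}(x)$;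 $\mathbf{F}$ has strict branches if it has at least one node and for every branch $B$, $\bigcap_{x\in B}\mathbf{F}_x$ is a singleton; $\mathbf{F}$ is open in $X$ if every leaf is open in $X$; $\mathbf{F}$ is a foliage $\omega,\omega$-tree if its skeleton is order-isomorphic to $({}^{<\omega}\omega,\subsetneq)$. $\mathbf{F}$ is a Baire foliage tree on $X$ if it is an open in $X$, locally strict foliage $\omega,\omega$-tree with strict branches and $\mathbf{F}_{0_{\mathbf{F}}}=X$. $\mathbf{F}$ grows into $X$ if for every $p\in X$ and every (not necessarily open) neighbourhood $U$ of $p$ there is $z\in\mathrm{scope}_{\mathbf{F}}(p)$ with $\mathrm{shoot}_{\mathbf{F}}(z)\gg\{U\}$. A $\pi$-tree on $X$ is a Baire foliage tree on $X$ that grows into $X$. The standard foliage tree $\mathbf{S}$ has skeleton $({}^{<\omega}\omega,\subsetneq)$ and leaves $\mathbf{S}_x=\{p\in{}^{\omega}\omega:x\subseteq p\}$. An isomorphism between foliage trees $\mathbf{F}$ and $\mathbf{G}$ is a pair $(\varphi,\psi)$ where $\varphi$ is an order isomorphism from the skeleton of $\mathbf{F}$ onto the skeleton of $\mathbf{G}$, $\psi$ is a bijection from $\mathrm{flesh}\,\mathbf{F}$ onto $\mathrm{flesh}\,\mathbf{G}$, and $\psi[\mathbf{F}_x]=\mathbf{G}_{\varphi(x)}$ for every node $x$ of $\mathbf{F}$. *)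

From mathcomp Require Import all_boot.
From mathcomp Require Import boolp classical_sets cardinality.

Set Implicit Arguments.
Unset Strict Implicit.
Unset Printing Implicit Defensive.

Local Open Scope classical_set_scope.

Definition is_topology_on {P : Type} (X : set P) (O : set (set P)) : Prop :=
  [/\ (forall U, O U -> U `<=` X),
      O X,
      O set0,
      (forall F : set (set P), F `<=` O -> O (\bigcup_(U in F) U)) &
      (forall U V, O U -> O V -> O (U `&` V))].

Definition homeomorphism {P Q : Type} (X : set P) (OX : set (set P))
    (Y : set Q) (OY : set (set Q)) (psi : P -> Q) : Prop :=
  [/\ (forall a b, X a -> X b -> psi a = psi b -> a = b),
      psi @` X = Y &
      (forall U, U `<=` X -> (OX U <-> OY (psi @` U)))].

(* A tree: a strict partial order in which the predecessors of every node are
   well-ordered. The nodes are all inhabitants of the type N. *)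
Definition is_tree {N : Type} (lt : N -> N -> Prop) : Prop :=
  [/\ (forall x, ~ lt x x),
      (forall x y z, lt x y -> lt y z -> lt x z),
      (forall x y z, lt y x -> lt z x -> [\/ y = z, lt y z | lt z y]) &
      (forall x (A : set N), A `<=` [set y | lt y x] -> A !=set0 ->
         exists2 m, A m & forall a, A a -> m = a \/ lt m a)].

Definition sons {N : Type} (lt : N -> N -> Prop) (x : N) : set N :=
  [set y | lt x y /\ ~ (exists z, lt x z /\ lt z y)].

Definition is_maximal {N : Type} (lt : N -> N -> Prop) (x : N) : Prop :=
  ~ (exists y, lt x y).

Definition is_chain {N : Type} (lt : N -> N -> Prop) (B : set N) : Prop :=
  forall x y, B x -> B y -> [\/ x = y, lt x y | lt y x].

Definition is_branch {N : Type} (lt : N -> N -> Prop) (B : set N) : Prop :=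
  is_chain lt B /\ (forall C, is_chain lt C -> B `<=` C -> C = B).

Definition is_least {N : Type} (lt : N -> N -> Prop) (r : N) : Prop :=
  forall x, x = r \/ lt r x.

Definition sprefix (s t : seq nat) : Prop :=
  (size s < size t)%N /\ s = take (size s) t.

Definition omega_omega_tree {N : Type} (lt : N -> N -> Prop) : Prop :=
  exists phi : N -> seq nat, bijective phi /\
    (forall x y, lt x y <-> sprefix (phi x) (phi y)).

(* A foliage tree is given by a skeleton (N, lt) and leaves l : N -> set P. *)
Definition flesh {N P : Type} (l : N -> set P) : set P :=
  [set p | exists x, l x p].

Definition locally_strict {N P : Type} (lt : N -> N -> Prop) (l : N -> set P)
  : Prop :=
  forall x, ~ is_maximal lt x ->
    l x = \bigcup_(s in sons lt x) l s /\
    (forall s t, sons lt x s -> sons lt x t -> s <> t -> l s `&` l t = set0).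

Definition strict_branches {N P : Type} (lt : N -> N -> Prop) (l : N -> set P)
  : Prop :=
  (exists x : N, True) /\
  (forall B, is_branch lt B -> exists p, \bigcap_(x in B) l x = [set p]).

Definition open_in {N P : Type} (O : set (set P)) (l : N -> set P) : Prop :=
  forall x, O (l x).

Definition baire_foliage_tree {N P : Type} (lt : N -> N -> Prop)
  (l : N -> set P) (X : set P) (O : set (set P)) : Prop :=
  [/\ open_in O l, locally_strict lt l, omega_omega_tree lt,
      strict_branches lt l & exists2 r, is_least lt r & l r = X].

Definition shoot {N P : Type} (lt : N -> N -> Prop) (l : N -> set P) (v : N)
  : set (set P) :=
  [set G | exists2 C : set N, C `<=` sons lt v /\ finite_set (sons lt v `\` C)
                            & G = \bigcup_(x in C) l x].

Definition scope {N P : Type} (l : N -> set P) (p : P) : set N :=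
  [set x | l x p].

Definition refines {P : Type} (gamma delta : set (set P)) : Prop :=
  forall D, delta D -> D !=set0 ->
    exists G, [/\ gamma G, G !=set0 & G `<=` D].

Definition nbhd_in {P : Type} (X : set P) (O : set (set P)) (p : P) (U : set P)
  : Prop :=
  U `<=` X /\ exists V, [/\ O V, V p & V `<=` U].

Definition grows_into {N P : Type} (lt : N -> N -> Prop) (l : N -> set P)
  (X : set P) (O : set (set P)) : Prop :=
  forall p U, X p -> nbhd_in X O p U ->
    exists2 z, scope l p z & refines (shoot lt l z) [set U].

Definition pi_tree {N P : Type} (lt : N -> N -> Prop) (l : N -> set P)
  (X : set P) (O : set (set P)) : Prop :=
  baire_foliage_tree lt l X O /\ grows_into lt l X O.

Definition foliage_iso {N1 P1 N2 P2 : Type}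
  (lt1 : N1 -> N1 -> Prop) (l1 : N1 -> set P1)
  (lt2 : N2 -> N2 -> Prop) (l2 : N2 -> set P2)
  (phi : N1 -> N2) (psi : P1 -> P2) : Prop :=
  [/\ bijective phi,
      (forall x y, lt1 x y <-> lt2 (phi x) (phi y)),
      (forall a b, flesh l1 a -> flesh l1 b -> psi a = psi b -> a = b),
      psi @` flesh l1 = flesh l2 &
      (forall x, psi @` l1 x = l2 (phi x))].

Definition S_leaf (x : seq nat) : set (nat -> nat) :=
  [set p | forall i, (i < size x)%N -> p i = nth 0%N x i].

(* Over the tree of finite sequences, local strictness forces the nodes whose leaves
   contain a point p to be exactly the initial segments of one function
   [address p : nat -> nat], so [address] sends every leaf [l s] into the basic set
   [S_leaf s]; strict branches make it onto and injective on the flesh, hence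
   (id, address) is an isomorphism onto S.  An arbitrary skeleton isomorphic to
   omega^<omega is first reindexed by finite sequences.  For (b) and (c) the open sets of
   X are pushed forward along the point map, which thereby becomes a homeomorphism, and
   all the notions involved (open leaves, roots, neighbourhoods, shoots) are preserved by
   isomorphisms of foliage trees whose point map is a homeomorphism. *)

From mathcomp Require Import all_boot.
From mathcomp Require Import boolp classical_sets cardinality.

Set Implicit Arguments.
Unset Strict Implicit.
Unset Printing Implicit Defensive.
Local Open Scope classical_set_scope.

Lemma sprefix_nth s t i : sprefix s t -> (i < size s)%N -> nth 0 s i = nth 0 t i.
Proof. by case=> _ e hi; rewrite {1}e nth_take. Qed.

Lemma sprefix_rcons s n : sprefix s (rcons s n).
Proof. by split; rewrite ?size_rcons // -cats1 take_size_cat. Qed.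

Lemma sons_sprefixP s t : sons sprefix s t <-> exists n, t = rcons s n.
Proof.
split=> [[[lt_st e] no_mid]|[n ->]]; last first.
  split=> [|[u [[lt_su _] [lt_ut _]]]]; first exact: sprefix_rcons.
  by move: lt_ut; rewrite size_rcons ltnS leqNgt lt_su.
have size_t : size t = (size s).+1.
  apply/eqP; rewrite eqn_leq lt_st andbT leqNgt; apply/negP => lt_t.
  apply: no_mid; exists (take (size s).+1 t).
  have size_take : size (take (size s).+1 t) = (size s).+1 by rewrite size_takel // ltnW.
  by split; split; rewrite ?size_take // take_takel // -e.
exists (nth 0 t (size s)).
by rewrite -[in LHS](take_size t) size_t (take_nth 0) ?size_t // -e.
Qed.

Lemma sprefix_not_maximal s : ~ is_maximal sprefix s.
Proof. by apply; exists (rcons s 0); apply: sprefix_rcons. Qed.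

Lemma take_mkseq (f : nat -> nat) m n : (m <= n)%N -> take m (mkseq f n) = mkseq f m.
Proof.
move=> le_mn; apply: (@eq_from_nth _ 0); first by rewrite size_takel ?size_mkseq.
move=> i; rewrite size_takel ?size_mkseq // => lt_im.
by rewrite nth_take // !nth_mkseq // (leq_trans lt_im).
Qed.

Lemma sprefix_mkseq (f : nat -> nat) m n : (m < n)%N -> sprefix (mkseq f m) (mkseq f n).
Proof. by move=> lt_mn; split; rewrite !size_mkseq // take_mkseq // ltnW. Qed.

Lemma S_leafE f s : S_leaf s f <-> s = mkseq f (size s).
Proof.
split=> [Sf|-> i]; last by rewrite size_mkseq => lt_i; rewrite nth_mkseq.
by apply: (@eq_from_nth _ 0) => [|i lt_i]; rewrite ?size_mkseq // nth_mkseq // Sf.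
Qed.

Lemma S_leaf_nil : S_leaf [::] = setT.
Proof. by apply/seteqP; split=> // f _ i. Qed.

Lemma flesh_S_leaf : flesh S_leaf = setT.
Proof. by apply/seteqP; split=> // f _; exists [::]; rewrite S_leaf_nil. Qed.

Lemma is_least_sprefix s : is_least sprefix s <-> s = [::].
Proof.
split=> [least_s|-> [|n t]]; [|by left|by right].
by case: (least_s [::]) => [//|[]].
Qed.

Lemma is_chain_mkseq (f : nat -> nat) : is_chain sprefix (range (mkseq f)).
Proof.
move=> _ _ [m _ <-] [n _ <-].
case: (ltngtP m n) => [lt_mn|lt_nm|->]; [apply: Or32|apply: Or33|apply: Or31] => //;
  exact: sprefix_mkseq.
Qed.

Lemma is_branch_mkseq (f : nat -> nat) : is_branch sprefix (range (mkseq f)).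
Proof.
split=> [|C chainC sub]; first exact: is_chain_mkseq.
apply/seteqP; split=> [c Cc|]; last exact: sub.
exists (size c) => //.
have Cf : C (mkseq f (size c)) by apply: sub; exists (size c).
by case: (chainC _ _ Cc Cf) => [//|[]|[]]; rewrite size_mkseq ltnn.
Qed.

Definition compatible (C : set (seq nat)) : Prop :=
  forall u v i, C u -> C v -> (i < size u)%N -> (i < size v)%N -> nth 0 u i = nth 0 v i.

(* The union of the members of C seen as partial functions on nat, completed by 0. *)
Definition seq_union (C : set (seq nat)) (i : nat) : nat :=
  xget 0 [set n | exists2 t, C t & (i < size t)%N /\ nth 0 t i = n].

Lemma nth_seq_union C t i : compatible C -> C t -> (i < size t)%N ->
  seq_union C i = nth 0 t i.
Proof.
move=> compC Ct lt_it; rewrite /seq_union; case: xgetP => [n _ [u Cu [lt_iu <-]]|].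
  exact: compC.
by move=> /(_ (nth 0 t i))[]; exists t.
Qed.

Lemma mkseq_seq_union C t : compatible C -> C t -> mkseq (seq_union C) (size t) = t.
Proof.
move=> compC Ct; apply: (@eq_from_nth _ 0) => [|i]; rewrite size_mkseq // => lt_it.
by rewrite nth_mkseq // (nth_seq_union compC Ct).
Qed.

Lemma chain_compatible C : is_chain sprefix C -> compatible C.
Proof.
move=> chainC u v i Cu Cv lt_iu lt_iv.
by case: (chainC _ _ Cu Cv) => [->|/sprefix_nth->|/sprefix_nth<-].
Qed.

Lemma sprefix_branch_mkseq B : is_branch sprefix B -> exists f, B = range (mkseq f).
Proof.
move=> [chainB maxB]; exists (seq_union B); apply/esym/maxB; first exact: is_chain_mkseq.
by move=> t Bt; exists (size t) => //; apply: mkseq_seq_union (chain_compatible chainB) Bt.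
Qed.

Lemma bigcap_S_leaf_mkseq (f : nat -> nat) :
  \bigcap_(s in range (mkseq f)) S_leaf s = [set f].
Proof.
apply/seteqP; split=> [g Sg|_ -> _ [n _ <-]]; last by apply/S_leafE; rewrite size_mkseq.
apply: funext => i; have := Sg (mkseq f i.+1) (ex_intro2 _ _ _ I erefl) i.
by rewrite size_mkseq nth_mkseq // => ->.
Qed.

Lemma locally_strict_S : locally_strict sprefix S_leaf.
Proof.
move=> s _; split=> [|_ _ /sons_sprefixP[a ->] /sons_sprefixP[b ->] ne_ab].
  apply/seteqP; split=> [f /S_leafE e|f [_ /sons_sprefixP[n ->] Sf] i lt_i].
    exists (mkseq f (size s).+1); last by apply/S_leafE; rewrite size_mkseq.
    apply/sons_sprefixP; exists (f (size s)).
    by rewrite -cats1 /mkseq -addn1 iotaD map_cat -/(mkseq f (size s)) -e.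
  by rewrite Sf ?nth_rcons ?lt_i // size_rcons ltnW.
apply/seteqP; split=> // f [Sa Sb]; apply: ne_ab.
by move: (Sa (size s)) (Sb (size s)); rewrite !size_rcons !nth_rcons ltnn eqxx => -> // ->.
Qed.

Lemma strict_branches_S : strict_branches sprefix S_leaf.
Proof.
split=> [|B /sprefix_branch_mkseq[f ->]]; first by exists [::].
by exists f; apply: bigcap_S_leaf_mkseq.
Qed.

Lemma omega_omega_tree_sprefix : omega_omega_tree sprefix.
Proof. by exists id; split; [exists id|]. Qed.

Section LeavesOverSprefix.
Variables (P : Type) (l : seq nat -> set P).
Hypotheses (lsl : locally_strict sprefix l) (sbl : strict_branches sprefix l).

Lemma leaf_rconsP s p : l s p <-> exists n, l (rcons s n) p.
Proof.
have [-> _] := lsl (@sprefix_not_maximal s).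
split=> [[_ /sons_sprefixP[n ->]]|[n lp]]; first by exists n.
by exists (rcons s n) => //; apply/sons_sprefixP; exists n.
Qed.

Lemma leaf_rcons_inj s a b p : l (rcons s a) p -> l (rcons s b) p -> a = b.
Proof.
move=> la lb; apply: contrapT => ne_ab.
have son_s n : sons sprefix s (rcons s n) by apply/sons_sprefixP; exists n.
have ne_ab' : rcons s a <> rcons s b by move/rcons_inj => [].
have := (lsl (@sprefix_not_maximal s)).2 _ _ (son_s a) (son_s b) ne_ab'.
by move/seteqP => [/(_ p (conj la lb))].
Qed.

Lemma leaf_take t p k : l t p -> l (take k t) p.
Proof.
elim/last_ind: t => [//|t n IHt] lp.
case: (leqP k (size t)) => [le_kt|lt_tk]; last by rewrite take_oversize ?size_rcons.
by rewrite -cats1 takel_cat //; apply: IHt; apply/leaf_rconsP; exists n.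
Qed.

Lemma leaf_size_inj s t p : l s p -> l t p -> size s = size t -> s = t.
Proof.
elim/last_ind: s t => [t _ _ /esym/size0nil //|s a IHs t].
case/lastP: t => [|t b]; rewrite ?size_rcons // => lsa ltb [eq_st].
have e : s = t by apply: IHs eq_st; apply/leaf_rconsP; [exists a|exists b].
by move: ltb; rewrite -e => /(leaf_rcons_inj lsa) ->.
Qed.

Lemma compatible_scope p : compatible (scope l p).
Proof.
move=> s t i ls lt lt_is lt_it.
have e : take i.+1 s = take i.+1 t.
  by apply: (leaf_size_inj (p := p)); rewrite ?size_takel //; apply: leaf_take.
by rewrite -(nth_take 0 (ltnSn i) s) e nth_take.
Qed.

Lemma leaf_of_size t p k : l t p -> exists2 s, size s = k & l s p.
Proof.
move=> lt; elim: k => [|k [s <- /leaf_rconsP[n ln]]]; last first.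
  by exists (rcons s n); rewrite ?size_rcons.
by exists [::] => //; rewrite -(take0 t); apply: leaf_take.
Qed.

Definition address (p : P) : nat -> nat := seq_union (scope l p).

Lemma nth_address s p i : l s p -> (i < size s)%N -> address p i = nth 0 s i.
Proof. exact: nth_seq_union (@compatible_scope p). Qed.

Lemma leaf_address_mkseq t p k : l t p -> l (mkseq (address p) k) p.
Proof.
move=> lt; have [s <- ls] := leaf_of_size k lt.
by rewrite /address (mkseq_seq_union (@compatible_scope p) ls).
Qed.

Lemma image_address_leaf s : address @` l s = S_leaf s.
Proof.
apply/seteqP; split=> [_ [p ls <-] i lt_is|f /S_leafE e]; first exact: nth_address.
have [p bigcap_p] := sbl.2 _ (is_branch_mkseq f).
have lf_p k : l (mkseq f k) p.
  have : (\bigcap_(x in range (mkseq f)) l x) p by rewrite bigcap_p.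
  by apply; exists k.
exists p; first by rewrite e.
by apply: funext => i; rewrite (nth_address (lf_p i.+1)) ?size_mkseq // nth_mkseq.
Qed.

Lemma foliage_iso_S : foliage_iso sprefix l sprefix S_leaf id address.
Proof.
split=> //; first by exists id.
- move=> a b [s la] [t lb] eq_ab.
  have [q bigcap_q] := sbl.2 _ (is_branch_mkseq (address a)).
  have in_bigcap c u : l u c -> address c = address a ->
      (\bigcap_(x in range (mkseq (address a))) l x) c.
    by move=> lc <- _ [k _ <-]; apply: leaf_address_mkseq lc.
  move: (in_bigcap _ _ la erefl) (in_bigcap _ _ lb (esym eq_ab)).
  by rewrite bigcap_q => -> ->.
- apply/seteqP; split=> [_ [p [s ls] <-]|f [s]].
    by exists s; rewrite -image_address_leaf; exists p.
  by rewrite -image_address_leaf => -[p ls <-]; exists p => //; exists s.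
- exact: image_address_leaf.
Qed.

End LeavesOverSprefix.

Lemma setI_preimage_image (T U : Type) (X A : set T) (f : T -> U) :
  (forall a b, X a -> X b -> f a = f b -> a = b) -> A `<=` X ->
  X `&` f @^-1` (f @` A) = A.
Proof.
move=> injf AX; apply/seteqP; split=> [a [Xa [b Ab /injf eq_ba]]|a Aa].
  by rewrite -eq_ba //; apply: AX.
by split; [apply: AX|exists a].
Qed.

Lemma shoot_sub_flesh (N P : Type) (lt : N -> N -> Prop) (l : N -> set P) z G :
  shoot lt l z G -> G `<=` flesh l.
Proof. by move=> [C _ ->] p [x _ lp]; exists x. Qed.

Lemma foliage_iso_comp (N1 P1 N2 P2 N3 P3 : Type)
    (lt1 : N1 -> N1 -> Prop) (l1 : N1 -> set P1) (lt2 : N2 -> N2 -> Prop)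
    (l2 : N2 -> set P2) (lt3 : N3 -> N3 -> Prop) (l3 : N3 -> set P3)
    (phi : N1 -> N2) (psi : P1 -> P2) (phi' : N2 -> N3) (psi' : P2 -> P3) :
  foliage_iso lt1 l1 lt2 l2 phi psi -> foliage_iso lt2 l2 lt3 l3 phi' psi' ->
  foliage_iso lt1 l1 lt3 l3 (phi' \o phi) (psi' \o psi).
Proof.
case=> bij ord inj fl lf [bij' ord' inj' fl' lf']; split.
- exact: bij_comp.
- by move=> x y; rewrite ord ord'.
- move=> a b fa fb e; apply: inj => //.
  by apply: inj' e; rewrite -fl; [exists a|exists b].
- by rewrite -image_comp fl fl'.
- by move=> x; rewrite -image_comp lf lf'.
Qed.

Lemma foliage_iso_reindex (N1 N2 P : Type) (lt1 : N1 -> N1 -> Prop)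
    (lt2 : N2 -> N2 -> Prop) (l : N1 -> set P) (g : N2 -> N1) :
  bijective g -> (forall x y, lt2 x y <-> lt1 (g x) (g y)) ->
  foliage_iso lt2 (l \o g) lt1 l g id.
Proof.
move=> [h gh hg] ord; split=> //; first exact: (Bijective gh hg).
- rewrite image_id; apply/seteqP; split=> p [x lp]; first by exists (g x).
  by exists (h x); rewrite /= hg.
- by move=> x; rewrite image_id.
Qed.

Lemma branch_neq0 (N : Type) (lt : N -> N -> Prop) (x : N) (B : set N) :
  is_branch lt B -> B !=set0.
Proof.
move=> [_ maxB]; apply/set0P/eqP => B0.
have : [set x] = B by apply: maxB => [a b -> ->|]; [apply: Or31|rewrite B0].
by rewrite B0 => /seteqP[/(_ x erefl)].
Qed.

Section FoliageIso.
Variables (N1 P1 N2 P2 : Type) (lt1 : N1 -> N1 -> Prop) (l1 : N1 -> set P1).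
Variables (lt2 : N2 -> N2 -> Prop) (l2 : N2 -> set P2).
Variables (phi : N1 -> N2) (psi : P1 -> P2).
Hypothesis iso : foliage_iso lt1 l1 lt2 l2 phi psi.

Let phi_bij : bijective phi. Proof. by case: iso => ? _ _ _ _. Qed.
Let phi_lt x y : lt1 x y <-> lt2 (phi x) (phi y). Proof. by case: iso => _ ? _ _ _. Qed.
Let psi_inj a b : flesh l1 a -> flesh l1 b -> psi a = psi b -> a = b.
Proof. by case: iso => _ _ inj _ _; apply: inj. Qed.
Let psi_flesh : psi @` flesh l1 = flesh l2. Proof. by case: iso => _ _ _ ? _. Qed.
Let psi_leaf x : psi @` l1 x = l2 (phi x). Proof. by case: iso => _ _ _ _ ?. Qed.

Lemma iso_leafP x p : l1 x p <-> flesh l1 p /\ l2 (phi x) (psi p).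
Proof.
split=> [lp|[fp]]; first by split; [exists x|rewrite -psi_leaf; exists p].
by rewrite -psi_leaf => -[q lq /psi_inj <-] //; exists x.
Qed.

Lemma iso_surj y : exists x, y = phi x.
Proof. by case: phi_bij => g _ phig; exists (g y); rewrite phig. Qed.

Let phi_range : range phi = setT.
Proof. by apply/seteqP; split=> // y _; have [x ->] := iso_surj y; exists x. Qed.

Lemma iso_sons x y : sons lt1 x y <-> sons lt2 (phi x) (phi y).
Proof.
rewrite /sons /= phi_lt; split=> -[lt_xy no_mid]; split=> // -[z [lt_xz lt_zy]].
  by have [z' ez] := iso_surj z; apply: no_mid; exists z'; rewrite !phi_lt -ez.
by apply: no_mid; exists (phi z); rewrite -!phi_lt.
Qed.

Lemma iso_maximal x : is_maximal lt1 x <-> is_maximal lt2 (phi x).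
Proof.
split=> max_x [y lt_xy]; apply: max_x; last by exists (phi y); rewrite -phi_lt.
by have [y' ey] := iso_surj y; exists y'; rewrite phi_lt -ey.
Qed.

Lemma iso_least r : is_least lt1 r <-> is_least lt2 (phi r).
Proof.
split=> least_r y.
  by have [y' ->] := iso_surj y; case: (least_r y') => [->|]; [left|right; apply/phi_lt].
by case: (least_r (phi y)) => [/(bij_inj phi_bij)|/phi_lt]; [left|right].
Qed.

Lemma iso_locally_strict : locally_strict lt2 l2 -> locally_strict lt1 l1.
Proof.
move=> ls2 x /iso_maximal /ls2[leafE disj]; split.
  apply/seteqP; split=> p.
    move=> /iso_leafP[fp]; rewrite leafE => -[y son_y ly].
    have [y' ey] := iso_surj y.
    by exists y'; [rewrite iso_sons -ey|apply/iso_leafP; rewrite -ey].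
  move=> [y /iso_sons son_y /iso_leafP[fp ly]].
  by apply/iso_leafP; split=> //; rewrite leafE; exists (phi y).
move=> y z /iso_sons son_y /iso_sons son_z ne_yz.
apply/seteqP; split=> // p [/iso_leafP[_ ly] /iso_leafP[_ lz]].
have ne : phi y <> phi z by move/(bij_inj phi_bij).
by have /seteqP[/(_ (psi p) (conj ly lz))] := disj _ _ son_y son_z ne.
Qed.

Lemma iso_comparable x y : [\/ x = y, lt1 x y | lt1 y x] <->
  [\/ phi x = phi y, lt2 (phi x) (phi y) | lt2 (phi y) (phi x)].
Proof.
split=> [[->|/phi_lt|/phi_lt]|[/(bij_inj phi_bij)->|/phi_lt|/phi_lt]];
  by [apply: Or31|apply: Or32|apply: Or33].
Qed.

Lemma iso_branch B : is_branch lt1 B -> is_branch lt2 (phi @` B).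
Proof.
move=> [chainB maxB]; split=> [_ _ [a Ba <-] [b Bb <-]|C chainC sub].
  exact/iso_comparable/chainB.
have <- : phi @^-1` C = B.
  apply: maxB => [a b Ca Cb|a Ba]; last by apply: sub; exists a.
  exact/iso_comparable/chainC.
by rewrite (image_preimage _ phi_range).
Qed.

Lemma image_bigcap_leaf B : B !=set0 ->
  psi @` (\bigcap_(x in B) l1 x) = \bigcap_(x in B) l2 (phi x).
Proof.
move=> [b Bb]; apply/seteqP; split=> [_ [p lp <-] x Bx|q lq].
  by rewrite -psi_leaf; exists p => //; apply: lp.
have [p lbp pq] : (psi @` l1 b) q by rewrite psi_leaf; apply: lq.
by exists p => // x Bx; apply/iso_leafP; split; [exists b|rewrite pq; apply: lq].
Qed.

Lemma iso_strict_branches : strict_branches lt2 l2 -> strict_branches lt1 l1.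
Proof.
move=> [[y _] sb2]; have [x _] := iso_surj y; split=> [|B brB]; first by exists x.
have [b Bb] := branch_neq0 x brB.
have [q] := sb2 _ (iso_branch brB).
rewrite bigcap_image -image_bigcap_leaf; last by exists b.
move=> /seteqP[sub_q /(_ q erefl)[p lp pq]]; exists p.
apply/seteqP; split=> [a la|_ ->] //.
have fl c : (\bigcap_(x in B) l1 x) c -> flesh l1 c by move=> lc; exists b; apply: lc.
by apply: psi_inj; [exact: fl|exact: fl|rewrite pq; apply: sub_q; exists a].
Qed.

Lemma iso_leaf_flesh x : l2 (phi x) = flesh l2 -> l1 x = flesh l1.
Proof.
move=> full; apply/seteqP; split=> [p lp|p fp]; first by exists x.
by apply/iso_leafP; split=> //; rewrite full -psi_flesh; exists p.
Qed.

Lemma image_bigcup_leaf C : psi @` (\bigcup_(x in C) l1 x) = \bigcup_(x in C) l2 (phi x).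
Proof. by rewrite image_bigcup; under eq_bigcupr do rewrite psi_leaf. Qed.

Lemma iso_shoot z : shoot lt2 l2 (phi z) = [set psi @` G | G in shoot lt1 l1 z].
Proof.
have phi_inj := bij_inj phi_bij.
apply/seteqP; split=> [_ [C2 [sonsC2 finC2] ->]|_ [_ [C [sonsC finC] ->] <-]].
  exists (\bigcup_(x in phi @^-1` C2) l1 x).
    exists (phi @^-1` C2) => //; split=> [x /sonsC2/iso_sons //|].
    have -> : sons lt1 z `\` phi @^-1` C2 = phi @^-1` (sons lt2 (phi z) `\` C2).
      by apply/seteqP; split=> x [/iso_sons son_x nC2x].
    by apply: finite_preimage finC2 => x y _ _; apply: phi_inj.
  by rewrite image_bigcup_leaf -bigcup_image (image_preimage _ phi_range).
exists (phi @` C); last by rewrite image_bigcup_leaf bigcup_image.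
split; first by move=> _ [x Cx <-]; apply/iso_sons/sonsC.
have -> : sons lt2 (phi z) `\` phi @` C = phi @` (sons lt1 z `\` C).
  apply/seteqP; split=> [y [son_y nCy]|_ [x [son_x nCx] <-]].
    have [x ey] := iso_surj y; exists x; last by [].
    by split; [rewrite iso_sons -ey|move=> Cx; apply: nCy; exists x].
  by split; [apply/iso_sons|move=> [x' Cx' /phi_inj ex]; apply: nCx; rewrite -ex].
exact: finite_image.
Qed.

Lemma iso_refines z U : U `<=` flesh l1 ->
  refines (shoot lt1 l1 z) [set U] <-> refines (shoot lt2 l2 (phi z)) [set psi @` U].
Proof.
move=> U_fl; rewrite iso_shoot; split=> ref _ ->.
  move=> /nonempty_image /(ref _ erefl)[G [shG G0 GU]].
  by exists (psi @` G); split; [exists G|apply: image_nonempty|apply: image_subset].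
move=> /(image_nonempty psi) /(ref _ erefl)[_ [[G shG <-] /nonempty_image G0 GU]].
exists G; split=> //.
rewrite -(setI_preimage_image psi_inj U_fl).
rewrite -(setI_preimage_image psi_inj (shoot_sub_flesh shG)).
by move=> p [fp /GU Up]; split.
Qed.

End FoliageIso.

Section ImageTopology.
Variables (P Q : Type) (X : set P) (O : set (set P)) (psi : P -> Q) (Y : set Q).
Hypotheses (topX : is_topology_on X O) (psiY : psi @` X = Y).
Hypothesis psi_inj : forall a b, X a -> X b -> psi a = psi b -> a = b.

Definition image_topology : set (set Q) := [set V | V `<=` Y /\ O (X `&` psi @^-1` V)].

Lemma image_topologyP : is_topology_on Y image_topology.
Proof.
case: topX => _ OX O0 OU OI; rewrite /image_topology.
split=> [V [] //| | |F F_open|U V [UY OU'] [VY OV]].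
- by split=> //; rewrite setIidl // => p Xp; rewrite -psiY; exists p.
- by split=> //; rewrite preimage_set0 setI0.
- split=> [q [V FV Vq]|]; first by case: (F_open V FV) => + _; apply.
  rewrite preimage_bigcup setI_bigcupr -(bigcup_image F (fun V => X `&` psi @^-1` V) id).
  by apply: OU => _ [V FV <-]; case: (F_open V FV).
- split; first by move=> q [Uq _]; apply: UY.
  by rewrite preimage_setI -[X in X `&` _]setIid setIACA; apply: OI.
Qed.

Lemma homeomorphism_image_topology : homeomorphism X O Y image_topology psi.
Proof.
split=> // U UX; rewrite /image_topology /= setI_preimage_image //.
by split=> [|[]//]; split=> // _ [p Up <-]; rewrite -psiY; exists p => //; apply: UX.
Qed.

End ImageTopology.

Section Homeomorphism.
Variables (P1 P2 : Type) (X1 : set P1) (O1 : set (set P1)).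
Variables (X2 : set P2) (O2 : set (set P2)) (psi : P1 -> P2).
Hypotheses (top1 : is_topology_on X1 O1) (top2 : is_topology_on X2 O2).
Hypothesis homeo : homeomorphism X1 O1 X2 O2 psi.

Lemma homeomorphism_image_preimage V : V `<=` X2 -> psi @` (X1 `&` psi @^-1` V) = V.
Proof.
case: homeo => _ psiX _ VX; apply/seteqP; split=> [_ [p [_ Vp] <-] //|q Vq].
have [p Xp pq] : (psi @` X1) q by rewrite psiX; apply: VX.
by exists p => //; split; rewrite //= pq.
Qed.

Lemma homeomorphism_nbhd p U : X1 p -> U `<=` X1 ->
  nbhd_in X1 O1 p U <-> nbhd_in X2 O2 (psi p) (psi @` U).
Proof.
case: homeo => psi_inj psiX psi_open Xp UX; split=> [[_ [V [OV Vp VU]]]|[_ [V [OV Vp VU]]]].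
  have VX : V `<=` X1 by case: top1 => + _ _ _ _; apply.
  split; first by rewrite -psiX; apply: image_subset.
  by exists (psi @` V); split; [apply/psi_open|exists p|apply: image_subset].
have VX : V `<=` X2 by case: top2 => + _ _ _ _; apply.
split=> //; exists (X1 `&` psi @^-1` V); split.
- by apply/psi_open; [apply: subIsetl|rewrite homeomorphism_image_preimage].
- by [].
- by rewrite -(setI_preimage_image psi_inj UX) => a [Xa /VU].
Qed.

End Homeomorphism.

Section FoliageIsoHomeomorphism.
Variables (N1 P1 N2 P2 : Type) (lt1 : N1 -> N1 -> Prop) (l1 : N1 -> set P1).
Variables (lt2 : N2 -> N2 -> Prop) (l2 : N2 -> set P2).
Variables (phi : N1 -> N2) (psi : P1 -> P2).
Variables (X1 : set P1) (O1 : set (set P1)) (X2 : set P2) (O2 : set (set P2)).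
Hypotheses (iso : foliage_iso lt1 l1 lt2 l2 phi psi) (flX1 : flesh l1 = X1).
Hypothesis homeo : homeomorphism X1 O1 X2 O2 psi.

Let leaf_sub x : l1 x `<=` X1. Proof. by rewrite -flX1 => p lp; exists x. Qed.

Lemma iso_open_in : open_in O1 l1 <-> open_in O2 l2.
Proof.
case: homeo => _ _ psi_open; case: iso => _ _ _ _ psi_leaf.
split=> open_l y; last by apply/psi_open; [exact: leaf_sub|rewrite psi_leaf].
have [x ->] := iso_surj iso y.
by rewrite -psi_leaf; apply/psi_open; [exact: leaf_sub|].
Qed.

Lemma iso_grows_into : is_topology_on X1 O1 -> is_topology_on X2 O2 ->
  grows_into lt1 l1 X1 O1 <-> grows_into lt2 l2 X2 O2.
Proof.
move=> top1 top2; have nbhdP := homeomorphism_nbhd top1 top2 homeo.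
split=> grows => [q U2 X2q nbU2|p U X1p nbU].
  have U2X : U2 `<=` X2 by case: nbU2.
  have [p X1p pq] : (psi @` X1) q by case: homeo => _ -> _.
  rewrite -pq -(homeomorphism_image_preimage homeo U2X) in nbU2 *.
  have [z lzp ref] := grows p _ X1p ((nbhdP _ _ X1p (@subIsetl _ _ _)).2 nbU2).
  exists (phi z); first by have /(iso_leafP iso)[] := lzp.
  by apply/(iso_refines iso); rewrite ?flX1 //; apply: subIsetl.
have UX : U `<=` X1 by case: nbU.
have X2p : X2 (psi p) by case: homeo => _ <- _; exists p.
have [z lzp ref] := grows _ _ X2p ((nbhdP _ _ X1p UX).1 nbU).
have [z' ez] := iso_surj iso z; rewrite ez in lzp ref.
exists z'; first by apply/(iso_leafP iso); split=> //; rewrite flX1.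
by apply/(iso_refines iso); rewrite ?flX1.
Qed.

End FoliageIsoHomeomorphism.

Section IsomorphicToS.
Variables (N P : Type) (lt : N -> N -> Prop) (l : N -> set P).

Lemma exists_foliage_iso_S : locally_strict lt l -> omega_omega_tree lt ->
  strict_branches lt l -> exists phi psi, foliage_iso lt l sprefix S_leaf phi psi.
Proof.
move=> ls [phi [phi_bij phi_lt]] sb; have [g phig gphi] := phi_bij.
have g_lt s t : sprefix s t <-> lt (g s) (g t) by rewrite phi_lt !gphi.
have back := foliage_iso_reindex l (Bijective gphi phig) g_lt.
have forth : foliage_iso lt l sprefix (l \o g) phi id.
  have e : (l \o g) \o phi = l by apply: funext => x; rewrite /= phig.
  by have := foliage_iso_reindex (l \o g) phi_bij phi_lt; rewrite e.
have toS := foliage_iso_S (iso_locally_strict back ls) (iso_strict_branches back sb).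
by exists phi, (address (l \o g) \o id); apply: foliage_iso_comp forth toS.
Qed.

Lemma foliage_iso_S_strict phi psi : foliage_iso lt l sprefix S_leaf phi psi ->
  [/\ locally_strict lt l, omega_omega_tree lt & strict_branches lt l].
Proof.
move=> iso; split; first exact: iso_locally_strict iso locally_strict_S.
  by case: iso => bij ord _ _ _; exists phi.
exact: iso_strict_branches iso strict_branches_S.
Qed.

Variables (X : set P) (O : set (set P)).

Lemma baire_foliage_tree_iso_S : is_topology_on X O -> baire_foliage_tree lt l X O ->
  exists phi psi tau, [/\ foliage_iso lt l sprefix S_leaf phi psi,
    is_topology_on setT tau, flesh l = X, homeomorphism X O setT tau psi &
    baire_foliage_tree sprefix S_leaf setT tau].
Proof.
move=> topX [open_l ls oo sb [r least_r lrX]].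
have [phi [psi iso]] := exists_foliage_iso_S ls oo sb.
have flX : flesh l = X.
  rewrite -lrX; apply/esym/(iso_leaf_flesh iso).
  by move/(iso_least iso)/is_least_sprefix: least_r => ->; rewrite S_leaf_nil flesh_S_leaf.
have psiX : psi @` X = setT by case: iso => _ _ _ + _; rewrite flX flesh_S_leaf.
have psi_inj : forall a b, X a -> X b -> psi a = psi b -> a = b.
  by case: iso => _ _ + _ _; rewrite flX.
have homeo := homeomorphism_image_topology O psiX psi_inj.
exists phi, psi, (image_topology X O psi setT); split=> //; first exact: image_topologyP.
split; [|exact: locally_strict_S|exact: omega_omega_tree_sprefix|exact: strict_branches_S|].
  exact/(iso_open_in iso flX homeo).
by exists [::]; [apply/is_least_sprefix|exact: S_leaf_nil].
Qed.

Lemma baire_foliage_tree_of_iso_S phi psi tau :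
  foliage_iso lt l sprefix S_leaf phi psi -> flesh l = X ->
  homeomorphism X O setT tau psi -> baire_foliage_tree sprefix S_leaf setT tau ->
  baire_foliage_tree lt l X O.
Proof.
move=> iso flX homeo [open_S _ _ _ _]; have [ls oo sb] := foliage_iso_S_strict iso.
split=> //; first exact/(iso_open_in iso flX homeo).
have [r er] := iso_surj iso [::].
exists r; first by apply/(iso_least iso); rewrite -er; apply/is_least_sprefix.
by rewrite -flX; apply: (iso_leaf_flesh iso); rewrite -er S_leaf_nil flesh_S_leaf.
Qed.

End IsomorphicToS.

Theorem lemma4 (N P : Type) (lt : N -> N -> Prop) (l : N -> set P)
  (X : set P) (OX : set (set P)) :
  is_tree lt -> is_topology_on X OX ->
  [/\
   (* (a) *)
   ((locally_strict lt l /\ omega_omega_tree lt /\ strict_branches lt l) <->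
    exists (phi : N -> seq nat) (psi : P -> (nat -> nat)),
      foliage_iso lt l sprefix S_leaf phi psi),
   (* (b) *)
   (baire_foliage_tree lt l X OX <->
    exists (phi : N -> seq nat) (psi : P -> (nat -> nat))
           (tau : set (set (nat -> nat))),
      [/\ foliage_iso lt l sprefix S_leaf phi psi,
          is_topology_on setT tau,
          flesh l = X,
          homeomorphism X OX setT tau psi &
          baire_foliage_tree sprefix S_leaf setT tau]) &
   (* (c) *)
   (pi_tree lt l X OX <->
    exists (phi : N -> seq nat) (psi : P -> (nat -> nat))
           (tau : set (set (nat -> nat))),
      [/\ foliage_iso lt l sprefix S_leaf phi psi,
          is_topology_on setT tau,
          flesh l = X,
          homeomorphism X OX setT tau psi &
          pi_tree sprefix S_leaf setT tau])].
Proof.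
move=> _ topX; split.
- split=> [[ls [oo sb]]|[phi [psi /foliage_iso_S_strict[ls oo sb]]]] //.
  exact: exists_foliage_iso_S.
- split=> [|[phi [psi [tau [iso _ flX homeo bS]]]]]; first exact: baire_foliage_tree_iso_S.
  exact: baire_foliage_tree_of_iso_S iso flX homeo bS.
- split=> [[/(baire_foliage_tree_iso_S topX)[phi [psi [tau [iso topS flX homeo bS]]]] gr]|].
    exists phi, psi, tau; split=> //; split=> //.
    exact/(iso_grows_into iso flX homeo topX topS).
  move=> [phi [psi [tau [iso topS flX homeo [bS growsS]]]]].
  split; first exact: baire_foliage_tree_of_iso_S iso flX homeo bS.
  exact/(iso_grows_into iso flX homeo topX topS).
Qed.
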